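(* Let $\lambda,\sigma_1,\sigma_2\in\mathbb{C}^*$ and $\eta_1,\eta_2\in\mathbb{C}$. Let $V$ be the subspace of $\Omega(\lambda,\eta_1,\sigma_1,0)\otimes\Omega(\lambda,\eta_2,0,\sigma_2)$ spanned by $\{\sum_{t=0}^{j}\binom{j}{t}X^iY^{j-t}\otimes S^kT^t\mid i,j,k\in\mathbb{N}\}$, which is a proper subspace. Then $V$ is a minimal proper $\mathcal{G}$-submodule of $\Omega(\lambda,\eta_1,\sigma_1,0)\otimes\Omega(\lambda,\eta_2,0,\sigma_2)$ (i.e. $V$ is a nonzero proper submodule containing no nonzero proper submodule).
   Context: The planar Galilean conformal algebra $\mathcal{G}$ is the complex Lie algebra with basis $\{L_m,H_m,I_m,J_m\mid m\in\mathbb{Z}\}$ and brackets $[L_m,L_n]=(n-m)L_{m+n}$, $[L_m,H_n]=nH_{m+n}$, $[L_m,I_n]=(n-m)I_{m+n}$, $[L_m,J_n]=(n-m)J_{m+n}$, $[H_m,I_n]=I_{m+n}$, $[H_m,J_n]=-J_{m+n}$, and $[H_m,H_n]=[I_m,I_n]=[J_m,J_n]=[I_m,J_n]=0$ for all $m,n\in\mathbb{Z}$. For $\lambda,\sigma\in\mathbb{C}^*$, $\eta\in\mathbb{C}$, the module $\Omega(\lambda,\eta,\sigma,0)$ is $\mathbb{C}[X,Y]$ with $L_m f(X,Y)=\lambda^m(Y-mX+m\eta)f(X,Y-m)$, $H_m f(X,Y)=\lambda^m X f(X,Y-m)$, $I_m f(X,Y)=\lambda^m\sigma f(X-1,Y-m)$,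 $J_m f(X,Y)=0$. The module $\Omega(\lambda,\eta,0,\sigma)$ is $\mathbb{C}[S,T]$ with $L_m f(S,T)=\lambda^m(T+mS+m\eta)f(S,T-m)$, $H_m f(S,T)=\lambda^m S f(S,T-m)$, $I_m f(S,T)=0$, $J_m f(S,T)=\lambda^m\sigma f(S+1,T-m)$. The tensor product of $\mathcal{G}$-modules has action $x(v\otimes w)=xv\otimes w+v\otimes xw$. $\mathbb{N}$ denotes the non-negative integers. *)

From HB Require Import structures.
From mathcomp Require Import all_boot all_algebra.
From mathcomp Require Import Rstruct.
From mathcomp Require Import complex.
From mathcomp Require Export mpoly.
Set Implicit Arguments. Unset Strict Implicit. Unset Printing Implicit Defensive.
Import GRing.Theory Num.Theory.
Local Open Scope ring_scope.

Definition CC : Type := complex Rdefinitions.R.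

(* The tensor product C[X,Y] (x) C[S,T] is identified with C[X,Y,S,T]
   via f(X,Y) (x) g(S,T) |-> f(X,Y) g(S,T).  Variables: X=0, Y=1, S=2, T=3. *)
Definition Poly4 := {mpoly CC[4]}.
Definition vX : Poly4 := 'X_(inord 0).
Definition vY : Poly4 := 'X_(inord 1).
Definition vS : Poly4 := 'X_(inord 2).
Definition vT : Poly4 := 'X_(inord 3).

Definition subst4 (a b c d : Poly4) (F : Poly4) : Poly4 :=
  F \mPo [tuple a; b; c; d].

Definition cst (c : CC) : Poly4 := c%:MP.
Definition icst (m : int) : Poly4 := (m%:~R : CC)%:MP.

Inductive gca_gen := GL of int | GH of int | GI of int | GJ of int.

(* Action of the basis elements on Omega(lam, eta, sig, 0) = C[X,Y],
   extended to the first tensor factor (variables X,Y). *)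
Definition act_Omega1 (lam eta sig : CC) (x : gca_gen) (F : Poly4) : Poly4 :=
  match x with
  | GL m => lam ^ m *: ((vY - icst m * vX + icst m * cst eta)
                          * subst4 vX (vY - icst m) vS vT F)
  | GH m => lam ^ m *: (vX * subst4 vX (vY - icst m) vS vT F)
  | GI m => (lam ^ m * sig) *: subst4 (vX - 1) (vY - icst m) vS vT F
  | GJ m => 0
  end.

(* Action of the basis elements on Omega(lam, eta, 0, sig) = C[S,T],
   extended to the second tensor factor (variables S,T). *)
Definition act_Omega2 (lam eta sig : CC) (x : gca_gen) (F : Poly4) : Poly4 :=
  match x with
  | GL m => lam ^ m *: ((vT + icst m * vS + icst m * cst eta)
                          * subst4 vX vY vS (vT - icst m) F)
  | GH m => lam ^ m *: (vS * subst4 vX vY vS (vT - icst m) F)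
  | GI m => 0
  | GJ m => (lam ^ m * sig) *: subst4 vX vY (vS + 1) (vT - icst m) F
  end.

Definition act_tensor (lam eta1 sig1 eta2 sig2 : CC) (x : gca_gen) (F : Poly4)
  : Poly4 :=
  act_Omega1 lam eta1 sig1 x F + act_Omega2 lam eta2 sig2 x F.

Definition is_submodule (lam eta1 sig1 eta2 sig2 : CC) (W : Poly4 -> Prop)
  : Prop :=
  [/\ W 0,
      (forall F G, W F -> W G -> W (F + G)),
      (forall (c : CC) F, W F -> W (c *: F)) &
      (forall x F, W F -> W (act_tensor lam eta1 sig1 eta2 sig2 x F))].

Definition vgen (i j k : nat) : Poly4 :=
  \sum_(t < j.+1) ('C(j, t))%:R *:
     (vX ^+ i * vY ^+ (j - t) * vS ^+ k * vT ^+ t).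

Definition inV (F : Poly4) : Prop :=
  exists s : seq (CC * (nat * nat * nat)),
    F = \sum_(p <- s) p.1 *: vgen p.2.1.1 p.2.1.2 p.2.2.

(* Write u for Y + T.  Since sum_t binom(j,t) X^i Y^(j-t) S^k T^t = X^i S^k (Y + T)^j,
   V is the image of the ring morphism psi : C[x,s,u] -> C[X,Y,S,T] sending x, s, u to
   X, S, Y + T.  On this image every basis element of the algebra acts by a shift of
   (x, s, u) followed by a multiplication, so V is a submodule; it misses Y, which is
   not a polynomial in X, S and Y + T.
   If a submodule W of V contains some psi F with F <> 0, then I_0 - 1, J_0 - 1 and
   H_1 - H_0 act as finite differences in x, s and u (the last one up to the factor
   x + s).  They lower the degree in that variable without killing non-constant
   polynomials, so W contains a nonzero constant, hence 1.  Starting from 1, the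
   operators L_0, H_0, L_1 I_(-1) and I_0 produce every x^i s^k u^j, that is all of V. *)

From HB Require Import structures.
From mathcomp Require Import all_boot all_algebra.
From mathcomp Require Import Rstruct complex mpoly.
From mathcomp Require Import ring.
From Stdlib Require Import Classical.
Set Implicit Arguments.
Unset Strict Implicit.
Unset Printing Implicit Defensive.
Import GRing.Theory Num.Theory.
Local Open Scope ring_scope.

Lemma size_sub_lead_lt (R : nzRingType) (p q : {poly R}) :
  p != 0 -> size q = size p -> lead_coef q = lead_coef p ->
  (size (q - p)%R < size p)%N.
Proof.
move=> p0 Esz Elead; have le_qp : (size (q - p)%R <= size p)%N.
  by rewrite (leq_trans (size_polyD _ _)) // size_polyN Esz maxnn.
rewrite ltn_neqAle le_qp andbT; apply: contra p0 => /eqP Esub.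
have : lead_coef (q - p) == 0.
  by rewrite /lead_coef Esub coefB subr_eq0 -{1}Esz -/(lead_coef q) Elead.
rewrite lead_coef_eq0 subr_eq0 => /eqP qp.
by rewrite -size_poly_eq0 -Esub qp subrr size_poly0.
Qed.

Section FiniteDifference.

Variable R : idomainType.
Implicit Types (a c : R) (p : {poly R}).

Definition fdiff a p := p \Po ('X + a%:P) - p.

Lemma size_fdiff a p : p != 0 -> (size (fdiff a p) < size p)%N.
Proof.
move=> p0; have Esz : size (p \Po ('X + a%:P)) = size p.
  by rewrite size_comp_poly2 // size_XaddC.
apply: size_sub_lead_lt => //.
by rewrite lead_coef_comp ?size_XaddC // lead_coefXaddC expr1n mulr1.
Qed.

Hypothesis R_char0 : has_pchar0 R.

Lemma natmul_inj a : a != 0 -> injective (GRing.natmul a).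
Proof.
move=> a0; suff lt_neq m n : (m < n)%N -> a *+ m != a *+ n.
  by move=> m n Emn; apply/eqP/contraT; rewrite neq_ltn => /orP[] /lt_neq; rewrite Emn eqxx.
move=> lt_mn; rewrite eq_sym -subr_eq0 -mulrnBr ?(ltnW lt_mn) // -mulr_natr.
by rewrite mulf_eq0 negb_or a0 (pcharf0P _).1 // -lt0n subn_gt0.
Qed.

Lemma fdiff_neq0 a p : a != 0 -> (1 < size p)%N -> fdiff a p != 0.
Proof.
(* Otherwise p - p.[0] vanishes at every a *+ n. *)
move=> a0 sz_p; rewrite subr_eq0; apply: contraTneq sz_p => Ep.
pose q := p - (p.[0])%:P.
have root_q n : root q (a *+ n).
  rewrite /root !hornerE subr_eq0; apply/eqP; elim: n => [|n IHn]; first by rewrite mulr0n.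
  by rewrite mulrSr -IHn -{2}Ep horner_comp !hornerE.
have : q = 0.
  apply: (@roots_geq_poly_eq0 _ _ [seq a *+ n | n <- iota 0 (size q)]).
  - by apply/allP => _ /mapP[n _ ->].
  - by rewrite (map_inj_uniq (natmul_inj a0)) iota_uniq.
  - by rewrite size_map size_iota.
by move/eqP; rewrite subr_eq0 => /eqP ->; rewrite -leqNgt size_polyC leq_b1.
Qed.

Lemma fdiff_descent (P : {poly R} -> Prop) a c :
    a != 0 -> c != 0 -> (forall p, P p -> P (c *: fdiff a p)) ->
  forall p, p != 0 -> P p -> exists2 b, b != 0 & P b%:P.
Proof.
move=> a0 c0 P_fdiff p; have [n] := ubnP (size p).
elim: n p => // n IHn p /ltnSE sz_p p0 Pp.
have [le_p1|lt1p] := leqP (size p) 1.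
  by exists p`_0; rewrite -1?polyC_eq0 -size1_polyC.
apply: (IHn (c *: fdiff a p)); last exact: P_fdiff.
  by rewrite (leq_trans _ sz_p) // size_scale // size_fdiff.
by rewrite scale_poly_eq0 negb_or c0 fdiff_neq0.
Qed.

End FiniteDifference.

Lemma poly_morph_eq {R A : nzRingType} (g h : {poly R} -> A) :
    {morph g : p q / p + q} -> {morph g : p q / p * q} ->
    {morph h : p q / p + q} -> {morph h : p q / p * q} ->
    g 'X = h 'X -> (forall c, g c%:P = h c%:P) ->
  g =1 h.
Proof.
move=> gD gM hD hM ghX ghC; elim/poly_ind => [|p c IHp]; first by rewrite -polyC0 ghC.
by rewrite gD hD gM hM IHp ghX ghC.
Qed.
Arguments poly_morph_eq {R A} g h.

Lemma commr_rmorphC {R : nzSemiRingType} {A : comNzRingType} (f : {rmorphism R -> A}) x :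
  commr_rmorph f x.
Proof. by move=> c; apply: mulrC. Qed.

(* K[x, s, u] is modelled as K[x][s][u]: px, ps and pu are the variables, pc c the
   constant c. *)
Local Notation "{ 'poly3' K }" := {poly {poly {poly K}}}
  (at level 0, format "{ 'poly3'  K }").
Local Notation px := ('X%:P%:P).
Local Notation ps := ('X%:P).
Local Notation pu := ('X).
Local Notation pc c := (c%:P%:P%:P).

Local Notation eval3 f x s u :=
  (horner_morph (commr_rmorphC
    (horner_morph (commr_rmorphC (horner_morph (commr_rmorphC f x)) s)) u)).

Section Poly3.

Variable K : comNzRingType.

Section Eval3.

Variables (A : comNzRingType) (f : {rmorphism K -> A}) (x s u : A).

Lemma eval3_x : eval3 f x s u px = x.
Proof. by rewrite horner_morphC /= horner_morphC /= horner_morphX. Qed.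
Lemma eval3_s : eval3 f x s u ps = s.
Proof. by rewrite horner_morphC /= horner_morphX. Qed.
Lemma eval3_u : eval3 f x s u pu = u.
Proof. by rewrite horner_morphX. Qed.
Lemma eval3_c c : eval3 f x s u (pc c) = f c.
Proof. by rewrite horner_morphC /= horner_morphC /= horner_morphC. Qed.

End Eval3.

Lemma eval3_eq {A : nzRingType} (g h : {poly3 K} -> A) :
    {morph g : G H / G + H} -> {morph g : G H / G * H} ->
    {morph h : G H / G + H} -> {morph h : G H / G * H} ->
    g px = h px -> g ps = h ps -> g pu = h pu -> (forall c, g (pc c) = h (pc c)) ->
  g =1 h.
Proof.
move=> gD gM hD hM ghx ghs ghu ghc.
have gh1 p : g p%:P%:P = h p%:P%:P.
  elim/poly_ind: p => [|p c IHp]; first by rewrite -polyC0 ghc.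
  by rewrite !(polyCD, polyCM) gD hD gM hM IHp ghx ghc.
have gh2 q : g q%:P = h q%:P.
  elim/poly_ind: q => [|q p IHq]; first by rewrite -polyC0 gh1.
  by rewrite !(polyCD, polyCM) gD hD gM hM IHq ghs gh1.
elim/poly_ind => [|G q IHG]; first by rewrite -polyC0 gh2.
by rewrite gD hD gM hM IHG ghu gh2.
Qed.
Arguments eval3_eq {A} g h.

Definition polyC3 : {rmorphism K -> {poly3 K}} := polyC \o polyC \o polyC.

(* shift3 (and psi below) are plain functions with a copied rmorphism instance, so that
   rewriting with the rmorphism lemmas leaves them folded. *)
Definition shift3 (a c e : K) : {poly3 K} -> {poly3 K} :=
  eval3 polyC3 (px + pc a) (ps + pc c) (pu + pc e).
Arguments shift3 : simpl never.
HB.instance Definition _ a c e :=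
  GRing.RMorphism.copy (shift3 a c e) (eval3 polyC3 (px + pc a) (ps + pc c) (pu + pc e)).

Section Shift3.

Variables a c e : K.

Lemma shift3_x : shift3 a c e px = px + pc a. Proof. exact: eval3_x. Qed.
Lemma shift3_s : shift3 a c e ps = ps + pc c. Proof. exact: eval3_s. Qed.
Lemma shift3_u : shift3 a c e pu = pu + pc e. Proof. exact: eval3_u. Qed.
Lemma shift3_c z : shift3 a c e (pc z) = pc z. Proof. exact: eval3_c. Qed.

End Shift3.

Lemma pc0 : pc 0 = 0 :> {poly3 K}. Proof. by rewrite !polyC0. Qed.
Lemma pc1 : pc 1 = 1 :> {poly3 K}. Proof. by rewrite !polyC1. Qed.
Lemma pc_nat n : pc n%:R = n%:R :> {poly3 K}. Proof. by rewrite !polyC_natr. Qed.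

Lemma shift3_0 G : shift3 0 0 0 G = G.
Proof.
apply: (eval3_eq (shift3 0 0 0) id) => //; try exact: rmorphD; try exact: rmorphM.
- by rewrite shift3_x pc0 addr0.
- by rewrite shift3_s pc0 addr0.
- by rewrite shift3_u pc0 addr0.
- exact: shift3_c.
Qed.

Lemma shift3D a c e a' c' e' G :
  shift3 a c e (shift3 a' c' e' G) = shift3 (a + a') (c + c') (e + e') G.
Proof.
apply: (eval3_eq (fun G => shift3 a c e (shift3 a' c' e' G)));
  try exact: rmorphD; try exact: rmorphM.
- by move=> ? ?; rewrite !rmorphD.
- by move=> ? ?; rewrite !rmorphM.
- by rewrite !shift3_x !rmorphD /= shift3_x shift3_c addrA.
- by rewrite !shift3_s !rmorphD /= shift3_s shift3_c addrA.
- by rewrite !shift3_u !rmorphD /= shift3_u shift3_c addrA.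
- by move=> z; rewrite !shift3_c.
Qed.

Lemma shift3_polyCC a c e (p : {poly K}) :
  shift3 a c e p%:P%:P = (p \Po ('X + a%:P))%:P%:P.
Proof.
apply: (poly_morph_eq (fun p => shift3 a c e p%:P%:P) (fun p => (p \Po ('X + a%:P))%:P%:P)).
- by move=> ? ?; rewrite !rmorphD.
- by move=> ? ?; rewrite !rmorphM.
- by move=> ? ?; rewrite !rmorphD.
- by move=> ? ?; rewrite !rmorphM.
- by rewrite shift3_x comp_polyX !rmorphD.
- by move=> z; rewrite shift3_c comp_polyC.
Qed.

Lemma shift3_polyC c e (q : {poly {poly K}}) :
  shift3 0 c e q%:P = (q \Po ('X + c%:P%:P))%:P.
Proof.
apply: (poly_morph_eq (fun q => shift3 0 c e q%:P) (fun q => (q \Po ('X + c%:P%:P))%:P)).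
- by move=> ? ?; rewrite !rmorphD.
- by move=> ? ?; rewrite !rmorphM.
- by move=> ? ?; rewrite !rmorphD.
- by move=> ? ?; rewrite !rmorphM.
- by rewrite shift3_s comp_polyX !rmorphD.
- by move=> p; rewrite shift3_polyCC rmorph0 addr0 comp_polyXr comp_polyC.
Qed.

Lemma shift3_comp_poly e G : shift3 0 0 e G = G \Po ('X + e%:P%:P%:P).
Proof.
apply: poly_morph_eq; try exact: rmorphD; try exact: rmorphM.
- by rewrite shift3_u comp_polyX.
- by move=> q; rewrite shift3_polyC rmorph0 addr0 comp_polyXr comp_polyC.
Qed.

End Poly3.
Arguments eval3_eq {K A} g h.

Local Notation P3 := {poly3 CC}.

Definition psi : P3 -> Poly4 := eval3 (@mpolyC 4 CC) vX vS (vY + vT).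
Arguments psi : simpl never.
HB.instance Definition _ :=
  GRing.RMorphism.copy psi (eval3 (@mpolyC 4 CC) vX vS (vY + vT)).

Lemma psi_x : psi px = vX. Proof. exact: eval3_x. Qed.
Lemma psi_s : psi ps = vS. Proof. exact: eval3_s. Qed.
Lemma psi_u : psi pu = vY + vT. Proof. exact: eval3_u. Qed.
Lemma psi_c c : psi (pc c) = cst c. Proof. exact: eval3_c. Qed.

HB.instance Definition _ a b c d :=
  GRing.RMorphism.copy (subst4 a b c d) (comp_mpoly [tuple a; b; c; d]).

Lemma subst4_X a b c d : subst4 a b c d vX = a.
Proof. by rewrite /subst4 comp_mpolyXU inordK. Qed.
Lemma subst4_Y a b c d : subst4 a b c d vY = b.
Proof. by rewrite /subst4 comp_mpolyXU inordK. Qed.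
Lemma subst4_S a b c d : subst4 a b c d vS = c.
Proof. by rewrite /subst4 comp_mpolyXU inordK. Qed.
Lemma subst4_T a b c d : subst4 a b c d vT = d.
Proof. by rewrite /subst4 comp_mpolyXU inordK. Qed.
Lemma cst0 : cst 0 = 0. Proof. exact: rmorph0. Qed.
Lemma cst1 : cst 1 = 1. Proof. exact: rmorph1. Qed.
Lemma cstN z : cst (- z) = - cst z. Proof. exact: rmorphN. Qed.

Lemma subst4_cst a b c d z : subst4 a b c d (cst z) = cst z.
Proof. by rewrite /subst4 comp_mpolyC. Qed.

Lemma psi_shift a b c d G :
  subst4 (vX + cst a) (vY + cst b) (vS + cst c) (vT + cst d) (psi G) =
  psi (shift3 a c (b + d) G).
Proof.
apply: (eval3_eq (fun G => subst4 (vX + cst a) (vY + cst b) (vS + cst c) (vT + cst d) (psi G))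
                 (fun G => psi (shift3 a c (b + d) G))).
- by move=> ? ?; rewrite !rmorphD.
- by move=> ? ?; rewrite !rmorphM.
- by move=> ? ?; rewrite !rmorphD.
- by move=> ? ?; rewrite !rmorphM.
- by rewrite psi_x subst4_X shift3_x rmorphD /= psi_x psi_c.
- by rewrite psi_s subst4_S shift3_s rmorphD /= psi_s psi_c.
- rewrite psi_u rmorphD /= subst4_Y subst4_T shift3_u rmorphD /= psi_u psi_c.
  by rewrite /cst rmorphD addrACA.
- by move=> z; rewrite psi_c subst4_cst shift3_c psi_c.
Qed.

Lemma psi_scale c G : psi (pc c * G) = c *: psi G.
Proof. by rewrite rmorphM /= psi_c /cst mul_mpolyC. Qed.

(* On V the shifts Y - m and T - m both become u - m, and the two multipliers of L_m
   add up to u - m (x - s - eta) with eta = eta1 + eta2. *)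
Definition act3 (lam eta sig1 sig2 : CC) (x : gca_gen) (G : P3) : P3 :=
  match x with
  | GL m => pc (lam ^ m) * ((pu - pc m%:~R * (px - ps - pc eta)) * shift3 0 0 (- m%:~R) G)
  | GH m => pc (lam ^ m) * ((px + ps) * shift3 0 0 (- m%:~R) G)
  | GI m => pc (lam ^ m * sig1) * shift3 (-1) 0 (- m%:~R) G
  | GJ m => pc (lam ^ m * sig2) * shift3 0 1 (- m%:~R) G
  end.

Lemma act_tensor_psi lam eta1 sig1 eta2 sig2 x G :
  act_tensor lam eta1 sig1 eta2 sig2 x (psi G) = psi (act3 lam (eta1 + eta2) sig1 sig2 x G).
Proof.
have shift_Y m : subst4 vX (vY - icst m) vS vT (psi G) = psi (shift3 0 0 (- m%:~R) G).
  by have := psi_shift 0 (- m%:~R) 0 0 G; rewrite cstN cst0 !addr0.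
have shift_T m : subst4 vX vY vS (vT - icst m) (psi G) = psi (shift3 0 0 (- m%:~R) G).
  by have := psi_shift 0 0 0 (- m%:~R) G; rewrite cstN cst0 add0r !addr0.
case: x => m; rewrite /act_tensor /act_Omega1 /act_Omega2 /act3.
- rewrite shift_Y shift_T -scalerDr -mulrDl psi_scale rmorphM /=; congr (_ *: (_ * _)).
  rewrite !(rmorphB, rmorphM) /= psi_u psi_x psi_s !psi_c /icst /cst rmorphD /=.
  ring.
- rewrite shift_Y shift_T -scalerDr -mulrDl psi_scale rmorphM /=.
  by rewrite rmorphD /= psi_x psi_s.
- have := psi_shift (-1) (- m%:~R) 0 0 G; rewrite !cstN cst1 cst0 !addr0.
  by move=> ->; rewrite psi_scale.
- have := psi_shift 0 0 1 (- m%:~R) G; rewrite cstN cst1 cst0 !add0r !addr0.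
  by move=> ->; rewrite psi_scale.
Qed.

Lemma vgenE i j k : vgen i j k = vX ^+ i * vS ^+ k * (vY + vT) ^+ j.
Proof.
rewrite /vgen exprDn mulr_sumr; apply: eq_bigr => t _.
by rewrite scaler_nat mulrnAr; congr (_ *+ _); ring.
Qed.

Lemma psi_monomial i j k : psi (px ^+ i * ps ^+ k * pu ^+ j) = vgen i j k.
Proof. by rewrite !rmorphM /= !rmorphXn /= psi_x psi_s psi_u vgenE. Qed.

Lemma inV0 : inV 0.
Proof. by exists [::]; rewrite big_nil. Qed.

Lemma inVD F G : inV F -> inV G -> inV (F + G).
Proof. by move=> [s ->] [t ->]; exists (s ++ t); rewrite big_cat. Qed.

Lemma inVZ c F : inV F -> inV (c *: F).
Proof.
move=> [s ->]; exists [seq (c * p.1, p.2) | p <- s].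
by rewrite big_map scaler_sumr; apply: eq_bigr => p _; rewrite scalerA.
Qed.

Lemma inV_vgen i j k : inV (vgen i j k).
Proof. by exists [:: (1, (i, j, k))]; rewrite big_seq1 scale1r. Qed.

Lemma inV_mulr M F : (forall i j k, inV (vgen i j k * M)) -> inV F -> inV (F * M).
Proof.
move=> VM [s ->]; rewrite big_distrl /=.
elim: s => [|p s IHs]; first by rewrite big_nil; exact: inV0.
by rewrite big_cons -scalerAl; apply: inVD => //; apply: inVZ.
Qed.

Lemma inV_psi G : inV (psi G).
Proof.
have inV_cst c : inV (cst c).
  have -> : cst c = c *: vgen 0 0 0 by rewrite vgenE !expr0 !mulr1 /cst -alg_mpolyC.
  exact/inVZ/inV_vgen.
have mulX F : inV F -> inV (F * vX).
  apply: inV_mulr => i j k; have -> : vgen i j k * vX = vgen i.+1 j k.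
    by rewrite !vgenE exprS; ring.
  exact: inV_vgen.
have mulS F : inV F -> inV (F * vS).
  apply: inV_mulr => i j k; have -> : vgen i j k * vS = vgen i j k.+1.
    by rewrite !vgenE exprS; ring.
  exact: inV_vgen.
have mulU F : inV F -> inV (F * (vY + vT)).
  apply: inV_mulr => i j k; have -> : vgen i j k * (vY + vT) = vgen i j.+1 k.
    by rewrite !vgenE exprS; ring.
  exact: inV_vgen.
have inV_x p : inV (psi p%:P%:P).
  elim/poly_ind: p => [|p c IHp]; first by rewrite -polyC0 psi_c.
  by rewrite !(polyCD, polyCM) rmorphD rmorphM /= psi_x psi_c; apply/inVD/inV_cst/mulX.
have inV_xs q : inV (psi q%:P).
  elim/poly_ind: q => [|q p IHq]; first by rewrite -polyC0.
  by rewrite !(polyCD, polyCM) rmorphD rmorphM /= psi_s; apply/inVD/inV_x/mulS.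
elim/poly_ind: G => [|G q IHG]; first by rewrite -polyC0.
by rewrite rmorphD rmorphM /= psi_u; apply/inVD/inV_xs/mulU.
Qed.

Lemma inV_psiP F : inV F <-> exists G, F = psi G.
Proof.
split=> [[s ->]|[G ->]]; last exact: inV_psi.
exists (\sum_(p <- s) pc p.1 * (px ^+ p.2.1.1 * ps ^+ p.2.2 * pu ^+ p.2.1.2)).
by rewrite rmorph_sum /=; apply: eq_bigr => p _; rewrite psi_scale psi_monomial.
Qed.

Lemma inV_submodule lam eta1 sig1 eta2 sig2 : is_submodule lam eta1 sig1 eta2 sig2 inV.
Proof.
split; [exact: inV0 | exact: inVD | exact: inVZ |].
by move=> x F /inV_psiP[G ->]; rewrite act_tensor_psi; apply: inV_psi.
Qed.

Lemma vY_notin_V : ~ inV vY.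
Proof.
(* The evaluations at (X, Y, S, T) = (0, 1, 0, -1) and at 0 agree on V, but not on Y. *)
move=> /inV_psiP[G EG].
have : subst4 0 1 0 (-1) (psi G) = subst4 0 0 0 0 (psi G).
  apply: (eval3_eq (fun G => subst4 0 1 0 (-1) (psi G)) (fun G => subst4 0 0 0 0 (psi G))).
  - by move=> ? ?; rewrite !rmorphD.
  - by move=> ? ?; rewrite !rmorphM.
  - by move=> ? ?; rewrite !rmorphD.
  - by move=> ? ?; rewrite !rmorphM.
  - by rewrite psi_x !subst4_X.
  - by rewrite psi_s !subst4_S.
  - by rewrite psi_u !rmorphD /= !subst4_Y !subst4_T subrr addr0.
  - by move=> c; rewrite psi_c !subst4_cst.
by rewrite -EG subst4_Y subst4_Y => /eqP; rewrite oner_eq0.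
Qed.

Section MinimalSubmodule.

Variables (lam eta1 sig1 eta2 sig2 : CC) (W : Poly4 -> Prop).
Hypothesis W_submod : is_submodule lam eta1 sig1 eta2 sig2 W.
Hypotheses (lam_neq0 : lam != 0) (sig1_neq0 : sig1 != 0) (sig2_neq0 : sig2 != 0).

Local Notation Wp G := (W (psi G)).

Lemma Wp_add G H : Wp G -> Wp H -> Wp (G + H).
Proof. by case: W_submod => _ WD _ _; rewrite rmorphD; apply: WD. Qed.

Lemma Wp_scale c G : Wp G -> Wp (pc c * G).
Proof. by case: W_submod => _ _ WZ _; rewrite psi_scale; apply: WZ. Qed.

Lemma Wp_unscale c G : c != 0 -> Wp (pc c * G) -> Wp G.
Proof. by move=> c0 /(Wp_scale c^-1); rewrite mulrA -!rmorphM /= mulVf // !rmorph1 mul1r. Qed.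

Lemma Wp_sub G H : Wp G -> Wp H -> Wp (G - H).
Proof. by move=> WG /(Wp_scale (-1)); rewrite !rmorphN1 mulN1r; apply: Wp_add. Qed.

Lemma Wp_act x G : Wp G -> Wp (act3 lam (eta1 + eta2) sig1 sig2 x G).
Proof. by case: W_submod => _ _ _ Wact; rewrite -act_tensor_psi; apply: Wact. Qed.

Lemma Wp_I (m : int) G : Wp G -> Wp (shift3 (-1) 0 (- m%:~R) G).
Proof.
move=> /(Wp_act (GI m)); apply: Wp_unscale.
by rewrite mulf_neq0 // expfz_neq0.
Qed.

Lemma Wp_J (m : int) G : Wp G -> Wp (shift3 0 1 (- m%:~R) G).
Proof.
move=> /(Wp_act (GJ m)); apply: Wp_unscale.
by rewrite mulf_neq0 // expfz_neq0.
Qed.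

Lemma Wp_H (m : int) G : Wp G -> Wp ((px + ps) * shift3 0 0 (- m%:~R) G).
Proof. by move=> /(Wp_act (GH m)); apply: Wp_unscale; rewrite expfz_neq0. Qed.

Lemma Wp_L (m : int) G :
  Wp G -> Wp ((pu - pc m%:~R * (px - ps - pc (eta1 + eta2))) * shift3 0 0 (- m%:~R) G).
Proof. by move=> /(Wp_act (GL m)); apply: Wp_unscale; rewrite expfz_neq0. Qed.

Lemma Wp_I0 G : Wp G -> Wp (shift3 (-1) 0 0 G).
Proof. by move=> /(Wp_I 0); rewrite mulr0z oppr0. Qed.

Lemma Wp_J0 G : Wp G -> Wp (shift3 0 1 0 G).
Proof. by move=> /(Wp_J 0); rewrite mulr0z oppr0. Qed.

Lemma Wp_H0 G : Wp G -> Wp ((px + ps) * G).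
Proof. by move=> /(Wp_H 0); rewrite mulr0z oppr0 shift3_0. Qed.

Lemma Wp_L0 G : Wp G -> Wp (pu * G).
Proof. by move=> /(Wp_L 0); rewrite mulr0z pc0 mul0r subr0 oppr0 shift3_0. Qed.

Lemma Wp_one G : G != 0 -> Wp G -> Wp 1.
Proof.
have char0_P1 : has_pchar0 {poly CC} by move=> p; rewrite pchar_poly pchar_num.
have char0_P2 : has_pchar0 {poly {poly CC}} by move=> p; rewrite pchar_poly char0_P1.
move=> G_neq0 WG.
have [q q_neq0 Wq] : exists2 q, q != 0 & Wp q%:P.
  apply: (fdiff_descent char0_P2 (P := fun G => Wp G) (a := -1) (c := 'X%:P + 'X)
            _ _ _ G_neq0 WG).
  - by rewrite oppr_eq0 oner_eq0.
  - by rewrite addrC -size_poly_eq0 size_XaddC.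
  move=> H WH; have := Wp_sub (Wp_H 1 WH) (Wp_H0 WH).
  rewrite mulr1z shift3_comp_poly -mulrBr.
  by rewrite /fdiff -mul_polyC polyCD !polyCN !polyC1.
have [p p_neq0 W_p] : exists2 p, p != 0 & Wp p%:P%:P.
  apply: (fdiff_descent char0_P1 (P := fun q => Wp q%:P) (a := 1) (c := 1)
            _ _ _ q_neq0 Wq).
  - exact: oner_neq0.
  - exact: oner_neq0.
  move=> r Wr; have := Wp_sub (Wp_J0 Wr) Wr.
  by rewrite shift3_polyC scale1r /fdiff polyCB !polyC1.
have [b b_neq0 Wb] : exists2 b, b != 0 & Wp b%:P%:P%:P.
  apply: (fdiff_descent (@pchar_num CC) (P := fun p => Wp p%:P%:P) (a := -1) (c := 1)
            _ _ _ p_neq0 W_p).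
  - by rewrite oppr_eq0 oner_eq0.
  - exact: oner_neq0.
  move=> r Wr; have := Wp_sub (Wp_I0 Wr) Wr.
  by rewrite shift3_polyCC scale1r /fdiff !polyCB.
by apply: (Wp_unscale b_neq0); rewrite mulr1.
Qed.

(* With K = shift3 a 0 0 G, the operators L_0, H_0 and L_1 I_(-1) give u K, (x + s) K and
   (u - (x - s - eta)) K. *)
Lemma Wp_mul_shift a G : Wp (shift3 (a + 1) 0 0 G) ->
  Wp (px * shift3 a 0 0 G) /\ Wp (ps * shift3 a 0 0 G).
Proof.
move=> WG; have shift_a e : shift3 (-1) 0 e (shift3 (a + 1) 0 0 G) = shift3 a 0 e G.
  by rewrite shift3D addrCA addNr !addr0.
have WK : Wp (shift3 a 0 0 G) by rewrite -shift_a; apply: Wp_I0.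
have WL : Wp ((pu - (px - ps - pc (eta1 + eta2))) * shift3 a 0 0 G).
  have := Wp_L 1 (Wp_I (-1) WG); rewrite mulrN1z opprK shift_a mulr1z pc1 mul1r.
  by rewrite shift3D !add0r addNr.
move: (Wp_L0 WK) (Wp_H0 WK) (Wp_scale (eta1 + eta2) WK) WL.
move: (shift3 a 0 0 G) (pc (eta1 + eta2)) => K eta Wu Wsum Weta WL.
have Wdiff : Wp ((px - ps) * K).
  have -> : (px - ps) * K = pu * K + eta * K - (pu - (px - ps - eta)) * K by ring.
  exact/Wp_sub/WL/Wp_add.
have two_neq0 : (2 : CC) != 0 by rewrite pnatr_eq0.
split; apply: (Wp_unscale two_neq0); rewrite pc_nat.
- have -> : 2%:R * (px * K) = (px + ps) * K + (px - ps) * K by ring.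
  exact: Wp_add.
- have -> : 2%:R * (ps * K) = (px + ps) * K - (px - ps) * K by ring.
  exact: Wp_sub.
Qed.

(* The shift a is carried along because Wp_mul_shift only multiplies after a shift. *)
Lemma Wp_shift_monomial : Wp 1 ->
  forall i k j a, Wp (shift3 a 0 0 (px ^+ i * ps ^+ k * pu ^+ j)).
Proof.
move=> W1; have Wu j : Wp (pu ^+ j).
  by elim: j => [|j IHj]; rewrite ?expr0 // exprS; apply: Wp_L0.
elim=> [|i IHi] k j a.
  elim: k j a => [|k IHk] j a.
    by rewrite !expr0 !mul1r rmorphXn /= shift3_u pc0 addr0.
  have -> : px ^+ 0 * ps ^+ k.+1 * pu ^+ j = ps * (px ^+ 0 * ps ^+ k * pu ^+ j) :> P3.
    by rewrite exprS -!mulrA mulrCA.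
  rewrite rmorphM /= shift3_s pc0 addr0.
  exact: (Wp_mul_shift (IHk j (a + 1))).2.
have -> : px ^+ i.+1 * ps ^+ k * pu ^+ j = px * (px ^+ i * ps ^+ k * pu ^+ j) :> P3.
  by rewrite exprS !mulrA.
rewrite rmorphM /= shift3_x mulrDl.
exact: Wp_add (Wp_mul_shift (IHi k j (a + 1))).1 (Wp_scale a (IHi k j a)).
Qed.

Lemma V_sub_nonzero_submodule F : W F -> inV F -> F != 0 -> forall F', inV F' -> W F'.
Proof.
move=> WF /inV_psiP[G EG] F_neq0.
have G_neq0 : G != 0 by apply: contraNneq F_neq0 => G0; rewrite EG G0 rmorph0.
have W1 : Wp 1 by apply: (Wp_one G_neq0); rewrite -EG.
have Wgen i j k : W (vgen i j k).
  by rewrite -psi_monomial -[_ * _ * _]shift3_0; apply: Wp_shift_monomial.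
case: W_submod => W0 WD WZ _ _ [s ->].
elim: s => [|p s IHs]; first by rewrite big_nil.
by rewrite big_cons; apply: WD => //; apply: WZ.
Qed.

End MinimalSubmodule.

Theorem proposition3p3 (lam sig1 sig2 eta1 eta2 : CC) :
  lam != 0 -> sig1 != 0 -> sig2 != 0 ->
  [/\ is_submodule lam eta1 sig1 eta2 sig2 inV,
      (exists F, inV F /\ F != 0),
      (exists F, ~ inV F) &
      (forall W : Poly4 -> Prop,
          is_submodule lam eta1 sig1 eta2 sig2 W ->
          (forall F, W F -> inV F) ->
          (forall F, W F -> F = 0) \/ (forall F, inV F -> W F))].
Proof.
move=> lam_neq0 sig1_neq0 sig2_neq0; split.
- exact: inV_submodule.
- by exists 1; split; [apply/inV_psiP; exists 1; rewrite rmorph1 | exact: oner_neq0].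
- by exists vY; exact: vY_notin_V.
move=> W W_submod W_sub_V.
have [[F [WF F_neq0]]|no_nonzero] := classic (exists F, W F /\ F != 0).
  right; apply: (V_sub_nonzero_submodule W_submod lam_neq0 sig1_neq0 sig2_neq0 WF) => //.
  exact: W_sub_V.
left=> F WF; apply/eqP; apply: contra_notT no_nonzero => F_neq0.
by exists F.
Qed.
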